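(* Consider qubit decoherence under dynamical decoupling in multi-state telegraph-like noises, defined as follows. A noise is specified by real values $w_1,\dots,w_M$, a transition-rate matrix $\Gamma$ with $\sum_j\Gamma_{jk}=0$ for all $k$, and a stationary probability vector $y(0)$ with $\Gamma y(0)=0$; let $W=\mathrm{diag}(w_1,\dots,w_M)$. A DD sequence of $N\ge1$ ideal $\pi$ pulses is given by $0<\alpha_1<\dots<\alpha_N<1$, with $\alpha_0=0$, $\alpha_{N+1}=1$, $a_n=\alpha_n-\alpha_{n-1}$, satisfying the echo condition $\sum_{n=1}^{N+1}(-1)^{n+1}a_n=0$, and the decoherence function is $$\langle x(t)\rangle=\sum_{j}\Big[e^{[\Gamma+(-1)^N iW]a_{N+1}t}\cdots e^{[\Gamma-iW]a_2 t}\,e^{[\Gamma+iW]a_1 t}\,y(0)\Big]_j .$$ Then no DD sequence (for any number $N$ of pulses) suppresses the decoherence beyond the third order of the short-time expansion: for every such sequence, $1-\langle x(t)\rangle$ is not $O(t^4)$ as $t\to0$ for all multi-state telegraph-like noises, i.e. the decoherence is at least of order $t^3$.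
   Context: Physical setting: a qubit with Hamiltonian $H=S_z w(t)$ where $w(t)$ is a classical random field jumping randomly among the values $w_j$ with probabilities evolving by $\frac{d}{dt}Y_j=\sum_{j'}\Gamma_{jj'}Y_{j'}$; $x=S_x+iS_y$ and $\langle x(t)\rangle$ is its ensemble average, equal to $1$ in the absence of decoherence. Ideal $\pi$ pulses flip the sign of the effective field, producing the stated formula. *)

From HB Require Import structures.
From mathcomp Require Import all_boot all_order all_algebra.
From mathcomp Require Import all_classical all_reals all_analysis.
From mathcomp Require Import complex.
Set Implicit Arguments. Unset Strict Implicit. Unset Printing Implicit Defensive.
Import Order.TTheory GRing.Theory Num.Theory.
Import numFieldNormedType.Exports.
Local Open Scope ring_scope.
Local Open Scope complex_scope.
Local Open Scope classical_set_scope.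

Definition expm (R : realType) (n : nat) (A : 'M[R[i]]_n) : 'M[R[i]]_n :=
  lim (series (fun k : nat => (k`!%:R)^-1 *: A ^+ k) @ \oo)%classic.

Definition cmx (R : realType) (m n : nat) (A : 'M[R]_(m, n)) : 'M[R[i]]_(m, n) :=
  map_mx (fun r : R => r%:C) A.

Definition telegraph_noise (R : realType) (M : nat)
    (Gamma : 'M[R]_M) (y0 : 'cV[R]_M) : Prop :=
  [/\ forall k : 'I_M, \sum_(j < M) Gamma j k = 0,
      forall j k : 'I_M, j != k -> 0 <= Gamma j k,
      forall j : 'I_M, 0 <= y0 j 0,
      \sum_(j < M) y0 j 0 = 1
    & Gamma *m y0 = 0].

Definition aint (R : realType) (alpha : nat -> R) (n : nat) : R :=
  alpha n - alpha n.-1.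

Fixpoint dd_state (R : realType) (M : nat) (w : 'I_M -> R) (Gamma : 'M[R]_M)
    (y0 : 'cV[R]_M) (alpha : nat -> R) (t : R) (n : nat) : 'cV[R[i]]_M :=
  match n with
  | 0 => cmx y0
  | n'.+1 =>
      expm ((((aint alpha n) * t)%:C) *:
              (cmx Gamma + ((-1) ^+ n'.+2 * 'i) *: cmx (diag_mx (\row_j w j))))
        *m dd_state w Gamma y0 alpha t n'
  end.

Definition decoherence (R : realType) (M : nat) (w : 'I_M -> R) (Gamma : 'M[R]_M)
    (y0 : 'cV[R]_M) (N : nat) (alpha : nat -> R) (t : R) : R[i] :=
  \sum_(j < M) dd_state w Gamma y0 alpha t N.+1 j 0.

Definition dd_sequence (R : realType) (N : nat) (alpha : nat -> R) : Prop :=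
  [/\ (0 < N)%N, alpha 0 = 0, alpha N.+1 = 1,
      forall n, (n <= N)%N -> alpha n < alpha n.+1
    & \sum_(1 <= n < N.+2) (-1) ^+ n.+1 * aint alpha n = 0].

Definition bigO_t4 (R : realType) (f : R -> R[i]) : Prop :=
  exists (C delta : R), 0 < delta /\
    forall t : R, 0 < t < delta -> `|f t| <= (C * t ^+ 4)%:C.

(* For the symmetric two-state telegraph noise (unit flip rates, w = +1 / -1,
   y(0) = (1/2, 1/2)) the generator Gamma + s i W is -1 plus a matrix of square
   zero, so every free evolution is exactly e^{-tau} (1 + tau N_s), and <x(t)> is
   2 e^{-t} p(t), where (p, r) are the real coordinates of the state propagated by
   these elementary steps.  Expanding p to third order in t, the echo condition
   kills F(1), where F(u) = int_0^u s is the integral of the sign s = +1 / -1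
   switched by the pulses, and one is left with
   1 - <x(t)> = 2 (int_0^1 F(u)^2 du) t^3 + O(t^4).  The coefficient is positive
   for every sequence of pulse times, so no sequence reaches order t^4. *)

From HB Require Import structures.
From mathcomp Require Import all_boot all_order all_algebra.
From mathcomp Require Import all_classical all_reals all_analysis.
From mathcomp Require Import complex.
From mathcomp Require Import ring lra.
Import Order.TTheory GRing.Theory Num.Theory.
Import numFieldNormedType.Exports.
Set Implicit Arguments. Unset Strict Implicit. Unset Printing Implicit Defensive.
Local Open Scope ring_scope.
Local Open Scope complex_scope.

Lemma expr_scalar_add_nilpotent (K : comNzRingType) (A : algType K) (c : K) (N : A) :
  N * N = 0 -> forall k, (c *: 1 + N) ^+ k = c ^+ k *: 1 + (k%:R * c ^+ k.-1) *: N.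
Proof.
move=> NN; elim=> [|k IH]; first by rewrite expr0 scale1r mul0r scale0r addr0.
rewrite exprS IH mulrDl !mulrDr -!scalerAl -!scalerAr !mul1r mulr1 NN scaler0 addr0.
rewrite !scalerA -addrA -scalerDl; congr (_ + _ *: _); first by rewrite exprS.
case: k {IH} => [|k] /=; first by rewrite mul0r mulr0 add0r mul1r expr0.
by rewrite mulrCA -exprS [k.+2%:R]mulrSr mulrDl mul1r.
Qed.

Section MatrixExponential.
Variable R : realType.
Local Open Scope classical_set_scope.

Lemma normc_real (x : R) : `|x%:C| = `|x|%:C.
Proof. by rewrite normc_def /= expr0n /= addr0 sqrtr_sqr. Qed.

Lemma cvg_complex_real (u : nat -> R) (l : R) : u @ \oo --> l ->
  (fun k => (u k)%:C : R[i]^o) @ \oo --> (l%:C : R[i]^o).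
Proof.
move=> /cvgrPdist_lt ul; apply/cvgrPdist_lt => e e0.
have eE : e = (complex.Re e)%:C.
  by case: e e0 => a b; rewrite ltcE /= => /andP[/eqP -> _].
have e0' : 0 < complex.Re e by move: e0; rewrite eE ltcR.
near=> k; rewrite -rmorphB normc_real eE ltcR.
by near: k; apply: ul.
Unshelve. all: by end_near. Qed.

Lemma series_exp_scalar_add_nilpotent n (c : R) (N : 'M[R[i]]_n.+1) : N * N = 0 ->
  forall K, series (fun k : nat => (k`!%:R)^-1 *: (c%:C *: 1 + N) ^+ k) K.+1 =
  (series (exp_coeff c) K.+1)%:C *: 1 + (series (exp_coeff c) K)%:C *: N.
Proof.
move=> NN K.
have coefE k : (k`!%:R)^-1 * c%:C ^+ k = (exp_coeff c k)%:C :> R[i].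
  by rewrite exp_coeffE /= rmorphM fmorphV rmorphXn rmorph_nat.
have termE k : (k`!%:R)^-1 *: (c%:C *: 1 + N) ^+ k =
    (exp_coeff c k)%:C *: 1 + (if k is k'.+1 then exp_coeff c k' else 0)%:C *: N.
  rewrite expr_scalar_add_nilpotent // scalerDr !scalerA coefE; congr (_ + _).
  case: k => [|k]; first by rewrite mul0r mulr0 scale0r.
  rewrite -coefE; congr (_ *: _); rewrite [k.+1.-1]/= mulrA; congr (_ * _).
  by rewrite factS natrM invfM mulrAC mulVf ?mul1r.
rewrite !seriesEord /=; under eq_bigr do rewrite termE.
rewrite big_split /= -!scaler_suml -!rmorph_sum; congr (_ + _ *: _).
by rewrite big_ord_recl /= add0r.
Qed.

Lemma expm_scalar_add_nilpotent n (c : R) (N : 'M[R[i]]_n.+1) : N * N = 0 ->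
  expm (c%:C *: 1 + N) = (expR c)%:C *: (1 + N).
Proof.
move=> NN; rewrite /expm; set f := series _.
suff : f @ \oo --> ((expR c)%:C *: (1 + N) : 'M[R[i]^o]_n.+1) by exact: cvg_lim.
rewrite -cvg_shiftS /= /f.
under eq_fun do rewrite series_exp_scalar_add_nilpotent //.
rewrite scalerDr; apply: cvgD; apply: cvgZr_tmp; apply: cvg_complex_real.
  by rewrite (cvg_shiftS (series (exp_coeff c))); exact: is_cvg_series_exp_coeff.
exact: is_cvg_series_exp_coeff.
Qed.

Lemma expR_ge_taylor3 (x : R) : 0 <= x -> 1 + x + x ^+ 2 / 2 + x ^+ 3 / 6 <= expR x.
Proof.
move=> x0; apply: (le_trans _ (nondecreasing_cvgn_le _ (is_cvg_series_exp_coeff x) 4)).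
  rewrite seriesEord /= !big_ord_recr big_ord0 /= /exp_coeff /=.
  by rewrite expr0 expr1 fact0 !divr1 add0r.
apply: (@nondecreasing_series _ _ xpredT 0) => k _ _.
by rewrite /exp_coeff /= divr_ge0 // exprn_ge0.
Qed.

End MatrixExponential.

Section ShortTimeOrder.
Variable R : realDomainType.

Definition bigO_pow (k : nat) (f : R -> R) : Prop :=
  exists K : R, forall t, 0 < t <= 1 -> `|f t| <= K * t ^+ k.

Lemma eq_bigO_pow k f g : f =1 g -> bigO_pow k g -> bigO_pow k f.
Proof. by move=> fg [K gK]; exists K => t t01; rewrite fg gK. Qed.

Lemma bigO_powD k f g : bigO_pow k f -> bigO_pow k g ->
  bigO_pow k (fun t => f t + g t).
Proof.
move=> [K fK] [L gL]; exists (K + L) => t t01.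
rewrite mulrDl (le_trans (ler_normD _ _)) //; exact: lerD (fK t t01) (gL t t01).
Qed.

Lemma bigO_powZ k c f : bigO_pow k f -> bigO_pow k (fun t => c * f t).
Proof.
move=> [K fK]; exists (`|c| * K) => t t01.
by rewrite normrM -mulrA; apply: ler_wpM2l => //; exact: fK.
Qed.

Lemma bigO_pow_mulX k f : bigO_pow k f -> bigO_pow k.+1 (fun t => t * f t).
Proof.
move=> [K fK]; exists K => t /[dup] t01 /andP[t0 _].
by rewrite normrM gtr0_norm // exprS mulrCA; apply: ler_wpM2l; [exact: ltW | exact: fK].
Qed.

Lemma bigO_pow_monomial k c : bigO_pow k (fun t => c * t ^+ k).
Proof.
exists `|c| => t /andP[t0 _].
by rewrite normrM (ger0_norm (exprn_ge0 k (ltW t0))).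
Qed.

Lemma bigO_powW k f : bigO_pow k.+1 f -> bigO_pow k f.
Proof.
move=> [K fK]; exists `|K| => t /[dup] t01 /andP[t0 t1].
apply: (le_trans (fK t t01)); apply: (le_trans (ler_wpM2r _ (ler_norm K))).
  by rewrite exprn_ge0 // ltW.
by rewrite ler_wpM2l // ler_wiXn2l // ltW.
Qed.

End ShortTimeOrder.

Section EchoExpansion.
Context {R : realType}.

Definition pulse_sign (n : nat) : R := (-1) ^+ n.+1.

Lemma pulse_sign_pm n : pulse_sign n = 1 \/ pulse_sign n = -1.
Proof.
elim: n => [|n IH]; first by right; rewrite /pulse_sign expr1.
rewrite /pulse_sign exprS -/(pulse_sign n).
by case: IH => ->; [right; rewrite mulr1 | left; rewrite mulrN1 opprK].
Qed.

Definition echo_step (s tau : R) (pr : R * R) : R * R :=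
  ((1 + tau) * pr.1 - s * tau * pr.2, s * tau * pr.1 + (1 - tau) * pr.2).

Fixpoint echo_coords (alpha : nat -> R) (t : R) (n : nat) : R * R :=
  if n is m.+1 then
    echo_step (pulse_sign m.+1) (aint alpha m.+1 * t) (echo_coords alpha t m)
  else (1 / 2, 0).

(* [echoF alpha n] is [F(alpha_n)] for [F(u) = int_0^u s], where [s] is the sign
   [pulse_sign m] on [(alpha_(m-1), alpha_m)]; [echoG alpha n] is
   [int_0^(alpha_n) (u s(u) - F(u)) du] and [echoH alpha n] is
   [int_0^(alpha_n) F(u)^2 du]: the iterated integrals of the Dyson expansion of
   [echo_coords] up to third order in [t]. *)
Definition echoF (alpha : nat -> R) (n : nat) : R :=
  \sum_(1 <= m < n.+1) pulse_sign m * aint alpha m.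

Fixpoint echoG (alpha : nat -> R) (n : nat) : R :=
  if n is m.+1 then
    echoG alpha m + (pulse_sign m.+1 * aint alpha m.+1 * alpha m - aint alpha m.+1 * echoF alpha m)
  else 0.

Fixpoint echoH (alpha : nat -> R) (n : nat) : R :=
  if n is m.+1 then
    echoH alpha m + (aint alpha m.+1 * echoF alpha m ^+ 2
      + pulse_sign m.+1 * aint alpha m.+1 ^+ 2 * echoF alpha m + aint alpha m.+1 ^+ 3 / 3)
  else 0.

Lemma echoF0 alpha : echoF alpha 0 = 0.
Proof. by rewrite /echoF big_geq. Qed.

Lemma echoFS alpha n : echoF alpha n.+1 = echoF alpha n + pulse_sign n.+1 * aint alpha n.+1.
Proof. by rewrite /echoF big_nat_recr. Qed.

Definition cubic_coef (al F G H : R) : R := (al ^+ 3 / 6 - 2 * H - F * G + F ^+ 2 * al / 2) / 2.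

Definition coord1_approx (al F G H t : R) : R :=
  1 / 2 + al / 2 * t + (al ^+ 2 - F ^+ 2) / 4 * t ^+ 2 + cubic_coef al F G H * t ^+ 3.

Definition coord2_approx (F G t : R) : R := F / 2 * t + G / 2 * t ^+ 2.

Lemma echo_step_coord1_approx al F G H a s t pr : s = 1 \/ s = -1 ->
  (echo_step s (a * t) pr).1 - coord1_approx (al + a) (F + s * a)
    (G + (s * a * al - a * F)) (H + (a * F ^+ 2 + s * a ^+ 2 * F + a ^+ 3 / 3)) t
  = (pr.1 - coord1_approx al F G H t) + a * (t * (pr.1 - coord1_approx al F G H t))
    + - (s * a) * (t * (pr.2 - coord2_approx F G t)) + a * cubic_coef al F G H * t ^+ 4.
Proof. by case=> ->; rewrite /coord1_approx /coord2_approx /cubic_coef /=; field. Qed.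

Lemma echo_step_coord2_approx al F G H a s t pr : s = 1 \/ s = -1 ->
  (echo_step s (a * t) pr).2 - coord2_approx (F + s * a) (G + (s * a * al - a * F)) t
  = (pr.2 - coord2_approx F G t) + - a * (t * (pr.2 - coord2_approx F G t))
    + s * a * (t * (pr.1 - coord1_approx al F G H t))
    + (s * a * ((al ^+ 2 - F ^+ 2) / 4) - a * (G / 2)) * t ^+ 3
    + s * a * cubic_coef al F G H * t ^+ 4.
Proof. by case=> ->; rewrite /coord1_approx /coord2_approx /cubic_coef /=; field. Qed.

Lemma echo_coords_expansion (alpha : nat -> R) n : alpha 0 = 0 ->
  bigO_pow 4 (fun t => (echo_coords alpha t n).1 -
    coord1_approx (alpha n) (echoF alpha n) (echoG alpha n) (echoH alpha n) t) /\
  bigO_pow 3 (fun t => (echo_coords alpha t n).2 -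
    coord2_approx (echoF alpha n) (echoG alpha n) t).
Proof.
move=> a0; elim: n => [|n].
  rewrite /= a0 echoF0; split; exists 0 => t _; rewrite mul0r normr_le0 subr_eq0.
    by apply/eqP; rewrite /coord1_approx /cubic_coef; ring.
  by apply/eqP; rewrite /coord2_approx; ring.
set e1 := (fun t => (echo_coords alpha t n).1 - _).
set e2 := (fun t => (echo_coords alpha t n).2 - _) => -[IH1 IH2].
set a := aint alpha n.+1; set s := pulse_sign n.+1.
set c := cubic_coef (alpha n) (echoF alpha n) (echoG alpha n) (echoH alpha n).
have hs : s = 1 \/ s = -1 := pulse_sign_pm n.+1.
have alphaS : alpha n.+1 = alpha n + a by rewrite /a /aint; ring.
split.
- apply: (@eq_bigO_pow _ _ _
    (fun t => e1 t + a * (t * e1 t) + - (s * a) * (t * e2 t) + a * c * t ^+ 4)).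
    by move=> t; rewrite alphaS echoFS; exact: echo_step_coord1_approx.
  apply: bigO_powD (bigO_pow_monomial _ _).
  apply: bigO_powD (bigO_powZ _ (bigO_pow_mulX IH2)).
  exact: bigO_powD IH1 (bigO_powZ _ (bigO_powW (bigO_pow_mulX IH1))).
- apply: (@eq_bigO_pow _ _ _ (fun t => e2 t + - a * (t * e2 t) + s * a * (t * e1 t)
    + (s * a * ((alpha n ^+ 2 - echoF alpha n ^+ 2) / 4) - a * (echoG alpha n / 2)) * t ^+ 3
    + s * a * c * t ^+ 4)).
    by move=> t; rewrite echoFS; exact: echo_step_coord2_approx.
  apply: bigO_powD (bigO_powW (bigO_pow_monomial _ _)).
  apply: bigO_powD (bigO_pow_monomial _ _).
  apply: bigO_powD (bigO_powZ _ (bigO_powW (bigO_powW (bigO_pow_mulX IH1)))).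
  exact: bigO_powD IH2 (bigO_powZ _ (bigO_powW (bigO_pow_mulX IH2))).
Qed.

Lemma echoH_step_gt0 (a F s : R) : 0 < a -> s = 1 \/ s = -1 ->
  0 < a * F ^+ 2 + s * a ^+ 2 * F + a ^+ 3 / 3.
Proof.
move=> a0 hs; have a2 := exprn_gt0 2 a0.
have -> : a * F ^+ 2 + s * a ^+ 2 * F + a ^+ 3 / 3 =
    a * ((F + s * a / 2) ^+ 2 + a ^+ 2 / 12) by case: hs => ->; field.
by apply: mulr_gt0 => //; have := sqr_ge0 (F + s * a / 2); lra.
Qed.

Lemma echoH_gt0 (alpha : nat -> R) N :
  (forall n, (n <= N)%N -> alpha n < alpha n.+1) -> 0 < echoH alpha N.+1.
Proof.
move=> mono.
have step n : (n <= N)%N -> echoH alpha n < echoH alpha n.+1.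
  move=> nN; rewrite /= ltrDl; apply: echoH_step_gt0; last exact: pulse_sign_pm.
  by rewrite /aint subr_gt0 mono.
have H_ge0 n : (n <= N)%N -> 0 <= echoH alpha n.
  elim: n => [//|n IH] nN.
  by apply: le_trans (ltW (step n (ltnW nN))); apply: IH; apply: ltnW.
exact: le_lt_trans (H_ge0 N (leqnn N)) (step N (leqnn N)).
Qed.

End EchoExpansion.

Section TelegraphNoise.
Context {R : realType}.

Definition telegraph_rates : 'M[R]_2 := \matrix_(i, j) (if i == j then -1 else 1).
Definition telegraph_field (j : 'I_2) : R := if j == ord0 then 1 else -1.
Definition telegraph_y0 : 'cV[R]_2 := \col_(j < 2) (1 / 2).

Lemma telegraph_noise2 : telegraph_noise telegraph_rates telegraph_y0.
Proof.
split.
- move=> k; rewrite big_ord_recl big_ord1 !mxE.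
  by case: k => [[|[|//]] Hk]; rewrite /= ?addNr ?addrN.
- by move=> j k /negbTE jk; rewrite mxE jk ler01.
- by move=> j; rewrite mxE divr_ge0 // ?ler01 ?ler0n.
- by rewrite big_ord_recl big_ord1 !mxE; field.
- apply/matrixP => i j; rewrite !mxE big_ord_recl big_ord1 !mxE.
  by case: i => [[|[|//]] Hi]; rewrite /=; ring.
Qed.

Lemma complex_ext (x y : R[i]) :
  complex.Re x = complex.Re y -> complex.Im x = complex.Im y -> x = y.
Proof. by case: x => a b; case: y => c d /= -> ->. Qed.

Definition telegraph_nilpotent (tau s : R) : 'M[R[i]]_2 := \matrix_(i, j)
  (tau%:C * (if i == j then (if i == ord0 then s%:C * 'i else - (s%:C * 'i)) else 1)).

Lemma telegraph_generatorE tau s :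
  tau%:C *: (cmx telegraph_rates + (s%:C * 'i) *: cmx (diag_mx (\row_j telegraph_field j)))
  = (- tau)%:C *: 1 + telegraph_nilpotent tau s.
Proof.
apply/matrixP => i j; rewrite !mxE.
case: i => [[|[|//]] Hi]; case: j => [[|[|//]] Hj]; rewrite /= ?mxE /telegraph_field /=.
all: by rewrite ?mulr0n ?mulr1n; apply: complex_ext => /=; ring.
Qed.

Lemma telegraph_nilpotent_sqr tau s : s = 1 \/ s = -1 ->
  telegraph_nilpotent tau s * telegraph_nilpotent tau s = 0.
Proof.
move=> hs; apply/matrixP => i j; rewrite !mxE big_ord_recl big_ord1 !mxE.
case: i => [[|[|//]] Hi]; case: j => [[|[|//]] Hj]; rewrite /=.
all: by case: hs => ->; apply: complex_ext => /=; ring.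
Qed.

Definition telegraph_vec (pr : R * R) : 'cV[R[i]]_2 := \col_j
  (if j == ord0 then pr.1%:C + 'i * pr.2%:C else pr.1%:C - 'i * pr.2%:C).

Lemma telegraph_nilpotent_vec tau s pr : s = 1 \/ s = -1 ->
  (1 + telegraph_nilpotent tau s) *m telegraph_vec pr =
  telegraph_vec (echo_step s tau pr).
Proof.
move=> hs; apply/matrixP => i j; rewrite !mxE big_ord_recl big_ord1 !mxE.
case: i => [[|[|//]] Hi]; case: j => [[|//] Hj]; rewrite /=.
all: by case: hs => ->; apply: complex_ext => /=; ring.
Qed.

Lemma dd_state_telegraph (alpha : nat -> R) t n : alpha 0 = 0 ->
  dd_state telegraph_field telegraph_rates telegraph_y0 alpha t n =
  (expR (- (alpha n * t)))%:C *: telegraph_vec (echo_coords alpha t n).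
Proof.
move=> a0; elim: n => [|n IH].
  rewrite /= a0 mul0r oppr0 expR0 scale1r; apply/matrixP => i j; rewrite !mxE.
  by case: i => [[|[|//]] Hi]; case: j => [[|//] Hj]; apply: complex_ext => /=; ring.
rewrite [dd_state _ _ _ _ _ _]/= IH.
have -> : ((-1) ^+ n.+2 : R[i]) = (pulse_sign n.+1)%:C.
  by rewrite /pulse_sign rmorphXn rmorphN1.
rewrite telegraph_generatorE expm_scalar_add_nilpotent; last first.
  exact/telegraph_nilpotent_sqr/pulse_sign_pm.
rewrite -scalemxAl -scalemxAr scalerA telegraph_nilpotent_vec; last exact: pulse_sign_pm.
rewrite -rmorphM -expRD; congr ((expR _)%:C *: _).
by rewrite /aint; ring.
Qed.

Lemma decoherence_telegraph (alpha : nat -> R) N t : alpha 0 = 0 ->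
  decoherence telegraph_field telegraph_rates telegraph_y0 N alpha t =
  (2 * expR (- (alpha N.+1 * t)) * (echo_coords alpha t N.+1).1)%:C.
Proof.
move=> a0; rewrite /decoherence dd_state_telegraph // big_ord_recl big_ord1 !mxE /=.
by apply: complex_ext => /=; ring.
Qed.

End TelegraphNoise.

Section NoFourthOrderSuppression.
Variable R : realType.

Lemma not_bigO_t4_of_cubic_lower_bound (f : R -> R) (c K : R) : 0 < c ->
  (forall t, 0 < t <= 1 -> c * t ^+ 3 - K * t ^+ 4 <= f t) ->
  ~ bigO_t4 (fun t => (f t)%:C).
Proof.
move=> c0 low [C [del [del0 fC]]].
set M := `|K| + `|C| + 1.
have M0 : 0 < M by rewrite /M; have := normr_ge0 K; have := normr_ge0 C; lra.
set t := Num.min (del / 2) (Num.min 1 (c / M)).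
have t0 : 0 < t by rewrite !lt_min !divr_gt0 ?ltr01.
have tdel : t < del by rewrite gt_min; apply/orP; left; lra.
have t1 : t <= 1 by rewrite !ge_min lexx orbT.
have tM : M * t <= c.
  have : t <= c / M by rewrite !ge_min lexx !orbT.
  by rewrite ler_pdivlMr // mulrC.
have T3 : 0 < t ^+ 3 := exprn_gt0 3 t0.
have := low t; rewrite t0 t1 => /(_ isT) lowt.
have := fC t; rewrite t0 tdel normc_real lecR => /(_ isT) upt.
have t4 : t ^+ 4 = t * t ^+ 3 by rewrite exprS.
rewrite t4 in lowt upt.
have KC : (K + C) * t < M * t by rewrite ltr_pM2r // /M; have := ler_norm K; have := ler_norm C; lra.
have : (K + C) * t * t ^+ 3 < c * t ^+ 3.
  by rewrite ltr_pM2r //; exact: lt_le_trans tM.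
have := ler_norm (f t); lra.
Qed.

Lemma telegraph_echo_lower_bound (alpha : nat -> R) N :
  alpha 0 = 0 -> alpha N.+1 = 1 -> echoF alpha N.+1 = 0 -> 0 <= echoH alpha N.+1 ->
  exists K, forall t, 0 < t <= 1 ->
    2 * expR (-1) * echoH alpha N.+1 * t ^+ 3 - K * t ^+ 4 <=
    1 - 2 * expR (- t) * (echo_coords alpha t N.+1).1.
Proof.
move=> a0 a1 F0 H0; have [[K pK] _] := echo_coords_expansion N.+1 a0.
exists (2 * `|K|) => t /[dup] t01 /andP[t0 t1].
move: (pK t t01); rewrite a1 F0 ler_norml => /andP[_].
set H := echoH _ _; set p := (echo_coords _ _ _).1.
rewrite /coord1_approx /cubic_coef => hp.
have gap : 2 * H * t ^+ 3 - 2 * K * t ^+ 4 <= expR t - 2 * p.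
  by have := expR_ge_taylor3 (ltW t0); lra.
set E := expR (- t).
have E0 : 0 < E := expR_gt0 _.
have E1 : expR (-1) <= E by rewrite ler_expR lerN2.
have Ele1 : E <= 1 by rewrite -expR0 ler_expR oppr_le0 ltW.
have Eexp : E * expR t = 1 by rewrite mulrC expRxMexpNx_1.
have Ht3 : 0 <= H * t ^+ 3 by rewrite mulr_ge0 // exprn_ge0 // ltW.
have T4 : 0 <= t ^+ 4 by rewrite exprn_ge0 // ltW.
have EK : E * K <= `|K|.
  by apply: le_trans (ler_wpM2l (ltW E0) (ler_norm K)) _; rewrite ler_piMl.
have decayE : E * (expR t - 2 * p) = 1 - 2 * E * p by rewrite mulrBr Eexp; ring.
have := ler_wpM2l (ltW E0) gap; rewrite decayE.
have := ler_wpM2r Ht3 E1; have := ler_wpM2r T4 EK.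
lra.
Qed.

End NoFourthOrderSuppression.

Theorem corollary1 (R : realType) (N : nat) (alpha : nat -> R) :
  dd_sequence N alpha ->
  exists (M : nat) (w : 'I_M -> R) (Gamma : 'M[R]_M) (y0 : 'cV[R]_M),
    telegraph_noise Gamma y0 /\
    ~ bigO_t4 (fun t : R => 1 - decoherence w Gamma y0 N alpha t).
Proof.
move=> [_ a0 a1 mono echo].
exists 2, telegraph_field, telegraph_rates, telegraph_y0.
split; first exact: telegraph_noise2.
have H0 := echoH_gt0 mono.
have [K lowK] := telegraph_echo_lower_bound a0 a1 echo (ltW H0).
have -> : (fun t => 1 - decoherence telegraph_field telegraph_rates
                         telegraph_y0 N alpha t) =
          (fun t => (1 - 2 * expR (- t) * (echo_coords alpha t N.+1).1)%:C).
  by apply/funext => t; rewrite decoherence_telegraph // a1 mul1r rmorphB rmorph1.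
by apply: not_bigO_t4_of_cubic_lower_bound lowK; rewrite !mulr_gt0 ?expR_gt0.
Qed.
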